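(* Let $\nu_2\le\nu_1$ and endow $\mathbb{F}_q^{\nu_1}$ and $\mathbb{F}_q^{\nu_2}$ with the Hamming weight $\operatorname{wt}_H$. If $\psi:\mathbb{F}_q^{\nu_1}\to\mathbb{F}_q^{\nu_2}$ is a surjective weakly row monomial linear map, then $\operatorname{wt}_{\mathrm{quot},\psi}=\operatorname{wt}_H$ on $\mathbb{F}_q^{\nu_2}$.
   Context: A linear map $\psi:\mathbb{F}_q^{\nu_1}\to\mathbb{F}_q^{\nu_2}$ is weakly row monomial if for each standard basis vector $e_i$ of $\mathbb{F}_q^{\nu_1}$, $\psi(e_i)=\lambda_ie'_{j_i}$ for some (possibly zero) $\lambda_i\in\mathbb{F}_q$ and some standard basis vector $e'_{j_i}$ of $\mathbb{F}_q^{\nu_2}$. The quotient weight is $\operatorname{wt}_{\mathrm{quot},\psi}(y)=\min\{\operatorname{wt}_H(x):x\in\psi^{-1}(y)\}$. *)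

From HB Require Import structures.
From mathcomp Require Import all_boot all_order all_algebra.
Set Implicit Arguments. Unset Strict Implicit. Unset Printing Implicit Defensive.
Import GRing.Theory.
Local Open Scope ring_scope.

Definition wtH (F : finFieldType) (n : nat) (x : 'rV[F]_n) : nat :=
  #|[set i : 'I_n | x 0 i != 0]|.

Definition std_basis (F : finFieldType) (n : nat) (i : 'I_n) : 'rV[F]_n :=
  delta_mx 0 i.
Arguments std_basis F {n} i.

Definition weakly_row_monomial (F : finFieldType) (n1 n2 : nat)
    (psi : 'rV[F]_n1 -> 'rV[F]_n2) : Prop :=
  forall i : 'I_n1, exists (lam : F) (j : 'I_n2),
    psi (std_basis F i) = lam *: std_basis F j.

(* Quotient weight: min of wtH x over the fibre psi^{-1}(y).
   (If the fibre is empty the value is the default n1.+1; irrelevant for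
   surjective psi.) *)
Definition wt_quot (F : finFieldType) (n1 n2 : nat)
    (psi : 'rV[F]_n1 -> 'rV[F]_n2) (y : 'rV[F]_n2) : nat :=
  \big[minn/n1.+1]_(x : 'rV[F]_n1 | psi x == y) wtH x.

From HB Require Import structures.
From mathcomp Require Import all_boot all_order all_algebra.
Import Order.TTheory GRing.Theory.
Local Open Scope ring_scope.

(* Write psi(e_i) = lam_i e'_(J i).  The j-th coordinate of psi(x) is the sum
   of the lam_i x_i over J i = j, so psi never increases the Hamming weight.
   Surjectivity forces every j to be J i for some i with lam_i <> 0; picking
   one such i = g j for each j, the vector sum_j (y_j / lam_(g j)) e_(g j) is a
   preimage of y of weight at most wtH y. *)

Lemma wtH_le_dim {F : finFieldType} {n : nat} (x : 'rV[F]_n) : (wtH x <= n)%N.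
Proof. by rewrite /wtH -[n in (_ <= n)%N]card_ord max_card. Qed.

Lemma wtH_sum_std_basis_le {F : finFieldType} m n (x : 'rV[F]_m)
    (a : 'I_m -> F) (f : 'I_m -> 'I_n) :
  (wtH (\sum_k (x 0 k * a k) *: std_basis F (f k)) <= wtH x)%N.
Proof.
rewrite /wtH; apply: leq_trans (leq_imset_card f _); apply: subset_leq_card.
apply/subsetP => j; rewrite inE summxE; apply: contraR => j_notin.
apply/eqP/big1 => k _; rewrite !mxE.
have [->|xk_nz] := eqVneq (x 0 k) 0; first by rewrite !mul0r.
suff /negbTE-> : j != f k by rewrite andbF mulr0.
by apply: contra j_notin => /eqP->; apply: imset_f; rewrite inE.
Qed.

Section WeaklyRowMonomial.

Set Implicit Arguments. Unset Strict Implicit.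

Variables (F : finFieldType) (n1 n2 : nat).
Variable psi : {linear 'rV[F]_n1 -> 'rV[F]_n2}.
Variables (lam : 'I_n1 -> F) (J : 'I_n1 -> 'I_n2).
Hypothesis psi_std_basis :
  forall i, psi (std_basis F i) = lam i *: std_basis F (J i).

Lemma wrm_expand x : psi x = \sum_i (x 0 i * lam i) *: std_basis F (J i).
Proof.
rewrite {1}(row_sum_delta x) raddf_sum; apply: eq_bigr => i _.
by rewrite [LHS](linearZZ psi) psi_std_basis scalerA.
Qed.

Lemma wrm_coord x j : psi x 0 j = \sum_(i | J i == j) x 0 i * lam i.
Proof.
rewrite wrm_expand summxE [RHS]big_mkcond; apply: eq_bigr => i _.
by rewrite !mxE eq_sym; case: (J i == j); rewrite ?mulr1 ?mulr0.
Qed.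

Lemma wtH_wrm_le x : (wtH (psi x) <= wtH x)%N.
Proof. by rewrite wrm_expand wtH_sum_std_basis_le. Qed.

Hypothesis psi_onto : forall y, exists x, psi x = y.

Lemma wrm_onto_std_basis j : exists i, (J i == j) && (lam i != 0).
Proof.
apply/existsP; have [x psi_x] := psi_onto (std_basis F j).
have : psi x 0 j != 0 by rewrite psi_x !mxE !eqxx oner_neq0.
rewrite wrm_coord; apply: contraNT => /existsPn no_i.
apply/eqP/big1 => i Ji_j; have := no_i i.
by rewrite Ji_j negbK => /eqP->; rewrite mulr0.
Qed.

Lemma wrm_lift y : exists2 x, psi x = y & (wtH x <= wtH y)%N.
Proof.
have [g g_spec] := fin_all_exists wrm_onto_std_basis.
exists (\sum_j (y 0 j * (lam (g j))^-1) *: std_basis F (g j)).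
  rewrite raddf_sum {2}(row_sum_delta y); apply: eq_bigr => j _.
  have /andP[/eqP J_gj lam_gj] := g_spec j.
  by rewrite [LHS](linearZZ psi) psi_std_basis scalerA J_gj mulfVK.
exact: wtH_sum_std_basis_le.
Qed.

End WeaklyRowMonomial.

Theorem lemma4p1 (F : finFieldType) (n1 n2 : nat)
    (psi : {linear 'rV[F]_n1 -> 'rV[F]_n2}) :
  (n2 <= n1)%N ->
  weakly_row_monomial psi ->
  (forall y : 'rV[F]_n2, exists x : 'rV[F]_n1, psi x = y) ->
  forall y : 'rV[F]_n2, wt_quot psi y = wtH y.
Proof.
move=> n2_le_n1 /fin_all_exists[lam /fin_all_exists[J psi_std]] psi_onto y.
have [x0 psi_x0 wt_x0] := wrm_lift psi_std psi_onto y.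
apply/eqP; rewrite eqn_leq /wt_quot -minEnat; apply/andP; split.
  by apply: (@bigmin_inf _ nat _ _ x0 _ _ _ _ wt_x0); rewrite psi_x0.
apply/(@bigmin_geP _ nat); split.
  exact: leq_trans (wtH_le_dim y) (leq_trans n2_le_n1 (leqnSn n1)).
by move=> x /eqP <-; exact: wtH_wrm_le psi_std x.
Qed.
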